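(* Let $b\ge 0$ and $h\ge 2b+1$ be integers, let $H$ be a set of $h$ vertices, and fix $\beta>0$. Let $M^1$ and $M^2$ be any two transition matrices (as defined in the context). Then the product $M^1M^2$ has a column containing at least $b+1$ strictly positive entries.
   Context: A reduced graph on $H$ is a directed graph obtained from the complete directed graph (without self-loops) on $H$ by deleting, for each vertex, an arbitrary set of $b$ of its incoming edges. A transition matrix is an $h\times h$ row-stochastic matrix $M$ with nonnegative real entries, rows and columns indexed by $H$, for which there is a reduced graph $R$ on $H$ such that $M_{ij}\ge\beta$ whenever $j=i$ or $(j,i)$ is an edge of $R$. (This models one phase of $D$ iterations of the Relay-IABC protocol: honest node $i$'s new state is a weighted combination, with weights at least $\beta$, of its own state and the states of its in-neighbors in the reduced graph remaining after trimming.) *)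

From HB Require Import structures.
From mathcomp Require Import all_boot all_order all_algebra.
Set Implicit Arguments. Unset Strict Implicit. Unset Printing Implicit Defensive.
Import Order.TTheory GRing.Theory Num.Theory.
Local Open Scope ring_scope.

(* Vertex set H is modelled by 'I_h.  A directed graph on H is a relation
   E : rel 'I_h, where E j i means that (j,i) is an edge (from j to i). *)

(* A reduced graph: obtained from the complete directed graph without
   self-loops by deleting, for each vertex i, exactly b of its incoming
   edges. *)
Definition reduced_graph (h b : nat) (E : rel 'I_h) : Prop :=
  (forall i, ~~ E i i) /\
  (forall i : 'I_h, #|[set j : 'I_h | (j != i) && ~~ E j i]| = b).

Definition transition_matrix (R : realFieldType) (h b : nat) (beta : R)
    (M : 'M[R]_h) : Prop :=
  (forall i j, 0 <= M i j) /\
  (forall i, \sum_j M i j = 1) /\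
  exists E : rel 'I_h, reduced_graph b E /\
    (forall i j, (j == i) || E j i -> beta <= M i j).

From mathcomp Require Import all_boot all_order all_algebra.
From mathcomp Require Import zify.
Import Order.TTheory GRing.Theory Num.Theory.

Set Implicit Arguments.
Unset Strict Implicit.
Unset Printing Implicit Defensive.

(* Every row of a transition matrix has at least h - b >= b + 1 positive
   entries (the diagonal and the in-neighbours in the reduced graph), so by
   double counting some column of M2 has at least b + 1 positive entries.
   Since the diagonal of M1 is positive and all entries are nonnegative,
   (M1 M2) i j >= M1 i i * M2 i j, so that column survives in M1 M2. *)

Section DoubleCounting.

Variables (T : finType) (P : rel T).

Lemma card_set_sum (p : pred T) : #|[set x | p x]| = \sum_x (p x : nat).
Proof.
rewrite -sum1_card big_mkcond /=; apply: eq_bigr => x _.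
by rewrite inE; case: (p x).
Qed.

Lemma sum_card_cols_rows :
  \sum_j #|[set i | P i j]| = \sum_i #|[set j | P i j]|.
Proof.
under eq_bigr do rewrite card_set_sum.
by rewrite exchange_big /=; apply: eq_bigr => i _; rewrite card_set_sum.
Qed.

Lemma col_card_ge_of_row_card_ge (k : nat) :
  0 < #|T| -> (forall i, k <= #|[set j | P i j]|) ->
  exists j, k <= #|[set i | P i j]|.
Proof.
move=> T_gt0 rowP; apply/existsP; apply: contraT => /existsPn colP.
have k_gt0 : 0 < k.
  by case/card_gt0P: T_gt0 => x _; move: (colP x); rewrite -ltnNge; lia.
have cols : \sum_(j : T) #|[set i | P i j]| <= \sum_(j : T) k.-1.
  by apply: leq_sum => j _; move: (colP j); rewrite -ltnNge; lia.
have rows : \sum_(i : T) k <= \sum_(i : T) #|[set j | P i j]|.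
  exact: leq_sum.
rewrite -sum_card_cols_rows !sum_nat_const in cols rows.
by have := leq_trans rows cols; rewrite leq_pmul2l //; lia.
Qed.

End DoubleCounting.

Lemma card_reduced_in_neighbours (h b : nat) (E : rel 'I_h) (i : 'I_h) :
  reduced_graph b E -> #|[set j | (j == i) || E j i]| = h - b.
Proof.
move=> [_ /(_ i) cardC]; have := cardsC [set j | (j == i) || E j i].
have -> : ~: [set j | (j == i) || E j i] = [set j | (j != i) && ~~ E j i].
  by apply/setP => j; rewrite !inE negb_or.
by rewrite cardC card_ord; lia.
Qed.

Section NonnegativeProduct.

Local Open Scope ring_scope.

Variable R : numDomainType.

Lemma mulmx_gt0 (m n p : nat) (A : 'M[R]_(m, n)) (B : 'M[R]_(n, p)) i k j :
  (forall i k, 0 <= A i k) -> (forall k j, 0 <= B k j) ->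
  0 < A i k -> 0 < B k j -> 0 < (A *m B) i j.
Proof.
move=> A_ge0 B_ge0 Aik_gt0 Bkj_gt0; rewrite mxE (bigD1 k) //=.
apply: (lt_le_trans (mulr_gt0 Aik_gt0 Bkj_gt0)); rewrite lerDl.
by apply: sumr_ge0 => l _; apply: mulr_ge0.
Qed.

End NonnegativeProduct.

Section TransitionMatrix.

Local Open Scope ring_scope.

Variables (R : realFieldType) (h b : nat) (beta : R) (M : 'M[R]_h).
Hypotheses (beta_gt0 : 0 < beta) (transM : transition_matrix b beta M).

Lemma transition_diag_gt0 i : 0 < M i i.
Proof.
have [_ [_ [E [_ /(_ i i) Mge]]]] := transM.
by apply: lt_le_trans beta_gt0 (Mge _); rewrite eqxx.
Qed.

Lemma transition_row_support i : (h - b <= #|[set j | (0 < M i j)%R]|)%N.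
Proof.
have [_ [_ [E [redE Mge]]]] := transM.
rewrite -(card_reduced_in_neighbours i redE); apply/subset_leq_card/subsetP.
by move=> j; rewrite !inE => /Mge; apply: lt_le_trans.
Qed.

End TransitionMatrix.

Theorem lemma2 (R : realFieldType) (b h : nat) (beta : R)
    (M1 M2 : 'M[R]_h) :
  (2 * b + 1 <= h)%N -> (0 < beta)%R ->
  transition_matrix b beta M1 -> transition_matrix b beta M2 ->
  exists j : 'I_h, b + 1 <= #|[set i : 'I_h | (0 < (M1 *m M2) i j)%R]|.
Proof.
move=> hb beta_gt0 trans1 trans2.
have rows i : b + 1 <= #|[set j | (0 < M2 i j)%R]|.
  by apply: leq_trans (transition_row_support beta_gt0 trans2 i); lia.
have [|j colj] :=
  col_card_ge_of_row_card_ge (P := fun i j => (0 < M2 i j)%R) _ rows.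
  by rewrite card_ord; lia.
exists j; apply: (leq_trans colj); apply/subset_leq_card/subsetP => i.
rewrite !inE => M2ij_gt0.
apply: (mulmx_gt0 _ _ (transition_diag_gt0 beta_gt0 trans1 i) M2ij_gt0).
- by case: trans1.
- by case: trans2.
Qed.
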